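(* Let $V$ be a finite vertex set with $|V| = n$ and let $\{k_u\}_{u\in V}$ be a degree sequence with $k_u \ge 1$ for all $u$, such that there are at least two distinct multiloop-graphs on $V$ with degree sequence $\{k_u\}$. Then the graph of multiloop-graphs $\mathcal{G}_{ll}(\{k_u\})$ is connected if and only if both of the following hold: (1) there exists a vertex $u$ with $k_u$ odd; and (2) there exists a vertex $v$ such that $k_v-(n-1)$ is negative or odd.
   Context: All graphs are on a fixed labeled vertex set $V$; a graph is a multiset $E$ of unordered pairs $(u,v)$ with $u,v\in V$, where a pair $(u,u)$ is a self-loop and an edge occurring more than once is a multiedge (or multiple self-loop, if it is a loop). The degree $k_u$ of $u$ is the number of edge-endpoints at $u$, so each self-loop at $u$ contributes $2$ to $k_u$. A multiloop-graph is such a graph in which self-loops may occur with any multiplicity but every non-loop edge $(u,v)$, $u\ne v$, occurs at most once. A double edge swap $(u,v),(x,y)\leadsto(u,x),(v,y)$ on a graph removes one copy of each of two edge occurrences $(u,v)$ and $(x,y)$ (loops allowed, i.e. possibly $u=v$ or $x=y$) and adds the edges $(u,x)$ and $(v,y)$; since edges are unordered, either pairing of endpoints may be used. It preserves the degree sequence. The graph of multiloop-graphs $\mathcal{G}_{ll}(\{k_u\})$ has as vertices all multiloop-graphs on $V$ with degree sequence $\{k_u\}$, with two distinct such graphs adjacent if one is obtained from the other by a single double edge swap (so every intermediate graph along a path must itself be a multiloop-graph). *)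

From mathcomp Require Import all_boot.
From Stdlib Require Import Relations.
Set Implicit Arguments. Unset Strict Implicit. Unset Printing Implicit Defensive.

(* A graph on the finite vertex set V is a multiset of unordered pairs,
   represented by its multiplicity function m : V * V -> nat, required to be
   symmetric: m (u,v) is the number of copies of the edge {u,v}
   (for u = v: the number of self-loops at u). *)
Definition mgraph (V : finType) := {ffun V * V -> nat}.

Definition symmetric_mg (V : finType) (m : mgraph V) : Prop :=
  forall u v, m (u, v) = m (v, u).

(* degree: each non-loop edge contributes 1, each self-loop contributes 2 *)
Definition deg (V : finType) (m : mgraph V) (u : V) : nat :=
  \sum_(v : V) m (u, v) + m (u, u).

Definition multiloop (V : finType) (m : mgraph V) : Prop :=
  symmetric_mg m /\ forall u v, u != v -> m (u, v) <= 1.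

Definition is_ml_graph (V : finType) (k : V -> nat) (m : mgraph V) : Prop :=
  multiloop m /\ forall u, deg m u = k u.

Definition add_edge (V : finType) (m : mgraph V) (u v : V) : mgraph V :=
  [ffun p => m p + ((p == (u, v)) || (p == (v, u)))].
Definition rem_edge (V : finType) (m : mgraph V) (u v : V) : mgraph V :=
  [ffun p => m p - ((p == (u, v)) || (p == (v, u)))].

(* The condition that the
   second edge is still present after removing the first ensures that the two
   occurrences are distinct. *)
Definition double_edge_swap (V : finType) (m m' : mgraph V) : Prop :=
  exists u v x y : V,
    0 < m (u, v) /\ 0 < (rem_edge m u v) (x, y) /\
    m' = add_edge (add_edge (rem_edge (rem_edge m u v) x y) u x) v y.

Definition ml_adj (V : finType) (k : V -> nat) (m m' : mgraph V) : Prop :=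
  is_ml_graph k m /\ is_ml_graph k m' /\ m <> m' /\
  (double_edge_swap m m' \/ double_edge_swap m' m).

Definition ml_connected (V : finType) (k : V -> nat) : Prop :=
  forall m m', is_ml_graph k m -> is_ml_graph k m' ->
    clos_refl_trans (mgraph V) (ml_adj k) m m'.

(* Necessity: if every degree is even, the graph made of loops only is isolated in G_ll, since
   swapping two loops either changes nothing or doubles a non-loop edge; if every k_v - (n-1)
   is even and nonnegative, the complete graph completed by loops is isolated for the same reason.
   Sufficiency: a graph whose non-loop edges do not form a matching can be swapped into one with
   more loops. Either some vertex has two non-adjacent neighbours, or the non-loop edges form
   disjoint cliques; then a clique edge together with an edge or a loop outside the clique
   produces a new loop, unless the only clique is a lone triangle (excluded by the odd degree)
   or spans all of V (excluded by the second condition); the loop used here exists because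
   k_w >= 1. Hence every graph reaches a graph whose non-loop edges are a perfect matching of
   the odd-degree vertices, and two such matchings are joined by swaps that each add one edge
   of the target matching. *)

From mathcomp Require Import all_boot zify.
From Stdlib Require Import Relations.
Set Implicit Arguments. Unset Strict Implicit. Unset Printing Implicit Defensive.

Section EdgeSwap.
Variable V : finType.
Implicit Types (m : mgraph V) (u v a b c d s t : V).

Definition uedge u v (p : V * V) : bool := (p == (u, v)) || (p == (v, u)).

Lemma uedgeE u v s t :
  uedge u v (s, t) = ((s == u) && (t == v)) || ((s == v) && (t == u)).
Proof. by rewrite /uedge !xpair_eqE. Qed.

Lemma uedgeC u v p : uedge v u p = uedge u v p.
Proof. by rewrite /uedge orbC. Qed.

Lemma uedge_sym u v s t : uedge u v (t, s) = uedge u v (s, t).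
Proof. by rewrite !uedgeE; case: (s == u); case: (t == v); case: (s == v); case: (t == u). Qed.

Lemma uedge_flip u v s t : uedge u v (s, t) = uedge s t (u, v).
Proof.
rewrite !uedgeE [u == s]eq_sym [v == t]eq_sym [u == t]eq_sym [v == s]eq_sym.
by case: (s == u); case: (t == v); case: (s == v); case: (t == u).
Qed.

Lemma uedge_diag a b x : a != b -> uedge a b (x, x) = false.
Proof. by move=> hab; rewrite uedgeE; apply: contraNF hab => /orP [] /andP [/eqP <- /eqP <-]. Qed.

Lemma uedge_loop u s t : s != t -> uedge u u (s, t) = false.
Proof. by rewrite uedgeE orbb; apply: contraNF => /andP [/eqP -> /eqP ->]. Qed.

Lemma add_edgeE m u v p : add_edge m u v p = m p + uedge u v p.
Proof. by rewrite ffunE. Qed.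

Lemma rem_edgeE m u v p : rem_edge m u v p = m p - uedge u v p.
Proof. by rewrite ffunE. Qed.

Lemma symmetric_add_edge m u v : symmetric_mg m -> symmetric_mg (add_edge m u v).
Proof. by move=> hs s t; rewrite !add_edgeE hs uedge_sym. Qed.

Lemma symmetric_rem_edge m u v : symmetric_mg m -> symmetric_mg (rem_edge m u v).
Proof. by move=> hs s t; rewrite !rem_edgeE hs uedge_sym. Qed.

Lemma rem_edgeK m u v p : symmetric_mg m -> 0 < m (u, v) ->
  rem_edge m u v p + uedge u v p = m p.
Proof.
move=> hs h; rewrite rem_edgeE; case: (boolP (uedge u v p)) => [|_]; last by lia.
by case/orP => /eqP ->; [|rewrite hs]; lia.
Qed.

Definition edge_swap m a b c d :=
  add_edge (add_edge (rem_edge (rem_edge m a b) c d) a c) b d.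

Lemma edge_swapE m a b c d p :
  edge_swap m a b c d p = rem_edge (rem_edge m a b) c d p + uedge a c p + uedge b d p.
Proof. by rewrite !add_edgeE. Qed.

Lemma symmetric_edge_swap m a b c d : symmetric_mg m -> symmetric_mg (edge_swap m a b c d).
Proof. by move=> hs; do 2 apply: symmetric_add_edge; do 2 apply: symmetric_rem_edge. Qed.

Definition valid_swap m a b c d := 0 < m (a, b) /\ 0 < rem_edge m a b (c, d).

Lemma edge_swap_balance m a b c d p : symmetric_mg m -> valid_swap m a b c d ->
  edge_swap m a b c d p + uedge a b p + uedge c d p = m p + uedge a c p + uedge b d p.
Proof.
move=> hs [h1 h2]; rewrite edge_swapE.
have := rem_edgeK p hs h1; have := rem_edgeK p (symmetric_rem_edge a b hs) h2; lia.
Qed.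

Lemma edge_swap_untouched m a b c d p : symmetric_mg m -> valid_swap m a b c d ->
  ~~ uedge a b p -> ~~ uedge c d p -> ~~ uedge a c p -> ~~ uedge b d p ->
  edge_swap m a b c d p = m p.
Proof.
move=> hs hsw /negbTE h1 /negbTE h2 /negbTE h3 /negbTE h4.
by have := edge_swap_balance p hs hsw; rewrite h1 h2 h3 h4; lia.
Qed.

Lemma sum_nat_eq1 (x : V) : \sum_(v : V) ((v == x) : nat) = 1.
Proof. by rewrite (bigD1 x) //= eqxx big1 // => v /negbTE ->. Qed.

Lemma deg_uedge a b u :
  \sum_(v : V) (uedge a b (u, v) : nat) + uedge a b (u, u) = (u == a) + (u == b).
Proof.
have sum_at x F : (forall v, F v = (v == x) :> nat) -> \sum_(v : V) F v = 1.
  by move=> hF; rewrite (eq_bigr _ (fun v _ => hF v)) sum_nat_eq1.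
case: (eqVneq u a) => [-> | nua]; case: (eqVneq a b) => [<- | nab].
- by rewrite (sum_at a) ?uedgeE ?eqxx // => v; rewrite uedgeE eqxx orbb.
- by rewrite (sum_at b) ?uedgeE ?eqxx ?(negbTE nab) // => v; rewrite uedgeE eqxx (negbTE nab) orbF.
- by rewrite big1 => [|v _]; rewrite uedgeE (negbTE nua).
case: (eqVneq u b) => [-> | nub].
  by rewrite (sum_at a) ?uedgeE ?eqxx 1?eq_sym ?(negbTE nab) // => v;
    rewrite uedgeE eqxx eq_sym (negbTE nab).
by rewrite big1 => [|v _]; rewrite uedgeE (negbTE nua) (negbTE nub).
Qed.

Lemma deg_edge_swap m a b c d u : symmetric_mg m -> valid_swap m a b c d ->
  deg (edge_swap m a b c d) u = deg m u.
Proof.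
move=> hs hsw.
have H : \sum_(v : V) (edge_swap m a b c d (u, v) + uedge a b (u, v) + uedge c d (u, v))
       = \sum_(v : V) (m (u, v) + uedge a c (u, v) + uedge b d (u, v)).
  by apply: eq_bigr => v _; apply: edge_swap_balance.
rewrite !big_split /= in H.
have := edge_swap_balance (u, u) hs hsw.
have := deg_uedge a b u; have := deg_uedge c d u.
have := deg_uedge a c u; have := deg_uedge b d u.
rewrite /deg; lia.
Qed.

Definition nloops m := \sum_(u : V) m (u, u).

Lemma sum_uedge_diag a b : \sum_(u : V) (uedge a b (u, u) : nat) = (a == b).
Proof.
have [<- | nab] := eqVneq a b.
  by rewrite (eq_bigr (fun v => (v == a) : nat)) ?sum_nat_eq1 // => v _; rewrite uedgeE orbb andbb.
rewrite big1 // => v _; rewrite uedgeE.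
by case: (eqVneq v a) => [-> | _]; rewrite ?(negbTE nab) ?andbF.
Qed.

Lemma nloops_edge_swap m a b c d : symmetric_mg m -> valid_swap m a b c d ->
  nloops (edge_swap m a b c d) + (a == b) + (c == d) = nloops m + (a == c) + (b == d).
Proof.
move=> hs hsw.
have H : \sum_(v : V) (edge_swap m a b c d (v, v) + uedge a b (v, v) + uedge c d (v, v))
       = \sum_(v : V) (m (v, v) + uedge a c (v, v) + uedge b d (v, v)).
  by apply: eq_bigr => v _; apply: edge_swap_balance.
by rewrite !big_split /= !sum_uedge_diag in H; rewrite /nloops; lia.
Qed.

Lemma multiloop_edge_swap m a b c d : multiloop m -> valid_swap m a b c d ->
  (a != c -> m (a, c) = 0) -> (b != d -> m (b, d) = 0) -> (a != c -> ~~ uedge a c (b, d)) ->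
  multiloop (edge_swap m a b c d).
Proof.
move=> [hs hl] hsw hac hbd hx; split; first exact: symmetric_edge_swap.
move=> s t hst; have := edge_swap_balance (s, t) hs hsw.
case E1: (uedge a c (s, t)).
  have [-> ->] : m (s, t) = 0 /\ uedge b d (s, t) = false.
    move: E1 hst => /orP [/eqP [-> ->] | /eqP [-> ->]] hst.
      by rewrite hac // uedge_flip (negbTE (hx hst)).
    by rewrite hs eq_sym in hst *; rewrite hac // uedge_sym uedge_flip (negbTE (hx hst)).
  lia.
case E2: (uedge b d (s, t)).
  have -> : m (s, t) = 0.
    by move: E2 hst => /orP [/eqP [-> ->] | /eqP [-> ->]] hst; [|rewrite hs]; rewrite hbd // eq_sym.
  lia.
have := hl s t hst; lia.
Qed.

Lemma edge_swapK m a b c d : symmetric_mg m -> valid_swap m a b c d ->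
  valid_swap (edge_swap m a b c d) a c b d /\ edge_swap (edge_swap m a b c d) a c b d = m.
Proof.
move=> hs hsw.
have hsw' : valid_swap (edge_swap m a b c d) a c b d.
  split; rewrite ?rem_edgeE !edge_swapE [uedge a c _]uedgeE [uedge b d _]uedgeE !eqxx /=; lia.
split => //; apply/ffunP => p; apply/eqP.
rewrite -(eqn_add2r (uedge a c p + uedge b d p)) !addnA.
by rewrite (edge_swap_balance p (symmetric_edge_swap a b c d hs) hsw') edge_swap_balance.
Qed.

Lemma double_edge_swap_sym m m' : symmetric_mg m -> double_edge_swap m m' -> double_edge_swap m' m.
Proof.
move=> hs [a [b [c [d [h1 [h2 ->]]]]]].
have [[h1' h2'] hK] := edge_swapK hs (conj h1 h2).
by exists a, c, b, d.
Qed.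

End EdgeSwap.

Ltac uedge_simpl :=
  rewrite ?uedgeE ?eqxx;
  repeat match goal with
  | H : is_true (?x != ?y) |- context [?x == ?y] => rewrite (negbTE H)
  | H : is_true (?x != ?y) |- context [?y == ?x] => rewrite [y == x]eq_sym (negbTE H)
  end;
  rewrite /= ?andbF ?andbT ?orbF ?orbT.

Section MultiloopGraphs.
Variable V : finType.
Variable k : V -> nat.
Implicit Types (m M : mgraph V) (u v w a b c d s t y z : V).

Local Notation valid := (is_ml_graph k).
Local Notation reach := (clos_refl_trans (mgraph V) (ml_adj k)).

Lemma ml_graph_sym m : valid m -> symmetric_mg m.
Proof. by case=> [[]]. Qed.

Lemma ml_graph_le1 m s t : valid m -> s != t -> m (s, t) <= 1.
Proof. by case=> [[_ h]] _; apply: h. Qed.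

Definition adj m s t := (s != t) && (0 < m (s, t)).

Lemma adjC m s t : valid m -> adj m s t = adj m t s.
Proof. by move=> hv; rewrite /adj eq_sym (ml_graph_sym hv). Qed.

Lemma adj_neq m s t : adj m s t -> s != t.
Proof. by case/andP. Qed.

Lemma adj_gt0 m s t : adj m s t -> 0 < m (s, t).
Proof. by case/andP. Qed.

Lemma adj_eq1 m s t : valid m -> adj m s t -> m (s, t) = 1.
Proof. by move=> hv /andP [hst]; have := ml_graph_le1 hv hst; lia. Qed.

Lemma nadj_eq0 m s t : s != t -> ~~ adj m s t -> m (s, t) = 0.
Proof. by rewrite /adj => -> /=; rewrite lt0n negbK => /eqP. Qed.

Definition nbr m u := [set z | adj m u z].

Lemma ml_graph_deg m u : valid m -> k u = #|nbr m u| + 2 * m (u, u).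
Proof.
case=> hml <-; rewrite /deg (bigD1 u) //= -sum1dep_card.
suff -> : \sum_(v | v != u) m (u, v) = \sum_(v | adj m u v) 1 by lia.
rewrite big_mkcond [RHS]big_mkcond; apply: eq_bigr => v _.
rewrite /adj eq_sym; case: (eqVneq v u) => //= hvu.
by have := hml.2 u v; rewrite eq_sym hvu => /(_ isT); case: (m (u, v)) => [|[|]].
Qed.

Lemma odd_nbr m u : valid m -> odd (k u) = odd #|nbr m u|.
Proof. by move=> hv; rewrite (ml_graph_deg u hv) oddD oddM addbF. Qed.

Lemma ml_graph_eq m m' : valid m -> valid m' ->
  (forall s t, s != t -> m (s, t) = m' (s, t)) -> m = m'.
Proof.
move=> hv hv' h; apply/ffunP => [[s t]].
have [<- | //] := eqVneq s t; last exact: h.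
have : nbr m s = nbr m' s.
  by apply/setP => z; rewrite !inE /adj; case: eqP => //= /eqP /h ->.
move=> e; have := ml_graph_deg s hv; have := ml_graph_deg s hv'.
by rewrite e => -> /addnI /eqP; rewrite eqn_mul2l => /eqP.
Qed.

Lemma nloops_le m : valid m -> nloops m <= \sum_(u : V) k u.
Proof. by move=> hv; apply: leq_sum => u _; rewrite (ml_graph_deg u hv); lia. Qed.

Lemma reach_sym m m' : reach m m' -> reach m' m.
Proof.
elim=> [x y [hx [hy [hne hsw]]] | x | x y z _ hxy _ hyz]; last exact: rt_trans hyz hxy.
  by apply: rt_step; do !split => //; [exact: nesym | tauto].
exact: rt_refl.
Qed.

Lemma edge_swap_step m a b c d : valid m -> valid_swap m a b c d ->
  (a != c -> m (a, c) = 0) -> (b != d -> m (b, d) = 0) -> (a != c -> ~~ uedge a c (b, d)) ->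
  [/\ valid (edge_swap m a b c d), reach m (edge_swap m a b c d) &
      nloops (edge_swap m a b c d) + (a == b) + (c == d) = nloops m + (a == c) + (b == d)].
Proof.
move=> hv hsw h1 h2 h3; have hs := ml_graph_sym hv.
have hv' : valid (edge_swap m a b c d).
  split; first exact: multiloop_edge_swap hv.1 hsw h1 h2 h3.
  by move=> u; rewrite deg_edge_swap //; apply: hv.2.
split => //; last exact: nloops_edge_swap.
have [<- | hne] := eqVneq m (edge_swap m a b c d); first exact: rt_refl.
apply: rt_step; do !split => //; first exact/eqP.
by left; exists a, b, c, d; case: hsw.
Qed.

Lemma isolated_not_connected m0 : valid m0 ->
  (exists m1 m2, valid m1 /\ valid m2 /\ m1 <> m2) ->
  (forall m', valid m' -> double_edge_swap m0 m' -> m' = m0) -> ~ ml_connected k.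
Proof.
move=> hv0 [m1 [m2 [hv1 [hv2 hne12]]]] hiso.
have [m [hv hne]] : exists m, valid m /\ m <> m0.
  have [e1 | ] := eqVneq m1 m0; last by exists m1; split => //; apply/eqP.
  by exists m2; split => // e2; apply: hne12; rewrite e1 e2.
move=> /(_ m0 m hv0 hv) /clos_rt_rt1n_iff h.
case: h hne => [|m' m'' [_ [hv' [hne' hsw]]] _ _]; first by [].
apply: hne'; symmetry; apply: hiso => //.
by case: hsw => // /double_edge_swap_sym; apply; apply: ml_graph_sym.
Qed.

Definition loop_graph : mgraph V := [ffun p => if p.1 == p.2 then (k p.1)./2 else 0].

Lemma loop_graph_valid : (forall u, ~~ odd (k u)) -> valid loop_graph.
Proof.
move=> hev; split; first split.
- by move=> s t; rewrite !ffunE /=; case: (eqVneq s t) => [->|].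
- by move=> s t hst; rewrite ffunE /= (negbTE hst).
move=> u; rewrite /deg (bigD1 u) //= big1 => [|v hv]; last by rewrite ffunE /= eq_sym (negbTE hv).
by rewrite ffunE /= eqxx; have := odd_double_half (k u); rewrite (negbTE (hev u)); lia.
Qed.

Lemma loop_graph_isolated : (forall u, ~~ odd (k u)) ->
  forall m, valid m -> double_edge_swap loop_graph m -> m = loop_graph.
Proof.
move=> hev m hv [a [b [c [d [h1 [h2 em]]]]]].
rewrite -/(edge_swap _ a b c d) in em; subst m.
have hv0 := loop_graph_valid hev.
have off s t : s != t -> loop_graph (s, t) = 0 by rewrite ffunE /= => /negbTE ->.
have hab : a = b by apply/eqP; apply: contraTT h1 => /off ->.
have hcd : c = d by apply/eqP; apply: contraTT h2 => /off; rewrite rem_edgeE => ->.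
subst b d; apply: ml_graph_eq (hv) (hv0) _ => s t hst.
have := ml_graph_le1 hv hst; have := edge_swap_balance (s, t) (ml_graph_sym hv0) (conj h1 h2).
by rewrite !uedge_loop // off //; lia.
Qed.

Definition complete_graph : mgraph V :=
  [ffun p => if p.1 == p.2 then (k p.1 - #|V|.-1)./2 else 1].

Lemma complete_graph_valid : (forall u, ~~ ((k u < #|V|.-1) || odd (k u - #|V|.-1))) ->
  valid complete_graph.
Proof.
move=> hc; split; first split.
- by move=> s t; rewrite !ffunE /=; case: (eqVneq s t) => [->|].
- by move=> s t hst; rewrite ffunE /= (negbTE hst).
move=> u; rewrite /deg (bigD1 u) //= (eq_bigr (fun _ => 1)) => [|v hv]; last first.
  by rewrite ffunE /= eq_sym (negbTE hv).
rewrite sum1dep_card (_ : [set x | x != u] = [set~ u]) ?cardsC1; last first.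
  by apply/setP => x; rewrite !inE.
have := hc u; rewrite negb_or -leqNgt => /andP [hle hev]; rewrite ffunE /= eqxx.
have := odd_double_half (k u - #|V|.-1); rewrite (negbTE hev) /= -addnn.
by move: hle; set n := #|V|.-1; lia.
Qed.

Lemma swap_added_ge_removed a b c d :
  (forall s t, s != t ->
     uedge a c (s, t) + uedge b d (s, t) <= uedge a b (s, t) + uedge c d (s, t)) ->
  (c != d -> uedge a b (c, d) = false) ->
  forall s t, s != t -> uedge a b (s, t) + uedge c d (s, t) <= uedge a c (s, t) + uedge b d (s, t).
Proof.
move=> H H2 s t hst.
case: (eqVneq a c) => [ac | hac].
  subst c; case: (eqVneq b d) => [bd | hbd].
    subst d; case: (eqVneq a b) => [ab | hab]; first by subst b.
    by move: (H2 hab); rewrite uedgeE !eqxx.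
  case: (eqVneq d a) => [da | hda]; first by subst d; rewrite (uedgeC a b); lia.
  case: (eqVneq b a) => [ba | hba]; first by subst b; lia.
  by move: (H b d hbd); uedge_simpl.
case: (eqVneq c b) => [cb | hcb]; first by subst c; lia.
case: (eqVneq a d) => [ad | had]; first by subst d; rewrite (uedgeC a c) (uedgeC a b); lia.
by move: (H a c hac); uedge_simpl; case: (_ && _).
Qed.

Lemma complete_graph_isolated : (forall u, ~~ ((k u < #|V|.-1) || odd (k u - #|V|.-1))) ->
  forall m, valid m -> double_edge_swap complete_graph m -> m = complete_graph.
Proof.
move=> hc m hv [a [b [c [d [h1 [h2 em]]]]]].
rewrite -/(edge_swap _ a b c d) in em; subst m.
have hv0 := complete_graph_valid hc; have hs := ml_graph_sym hv0.
have off s t : s != t -> complete_graph (s, t) = 1 by rewrite ffunE /= => /negbTE ->.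
have bal s t := edge_swap_balance (s, t) hs (conj h1 h2).
have le1 s t : s != t -> edge_swap complete_graph a b c d (s, t) <= 1.
  exact: ml_graph_le1 hv.
have added_le s t : s != t ->
  uedge a c (s, t) + uedge b d (s, t) <= uedge a b (s, t) + uedge c d (s, t).
  by move=> hst; have := bal s t; have := le1 s t hst; rewrite off //; lia.
have hcd : c != d -> uedge a b (c, d) = false.
  by move=> hcd; move: h2; rewrite rem_edgeE off //; case: (uedge a b (c, d)).
apply: ml_graph_eq (hv) (hv0) _ => s t hst.
have := swap_added_ge_removed added_le hcd hst; have := bal s t; have := le1 s t hst.
by rewrite off //; lia.
Qed.

Lemma adj_edge_swap_untouched m a b c d s t : valid m -> valid_swap m a b c d ->
  ~~ uedge a b (s, t) -> ~~ uedge c d (s, t) -> ~~ uedge a c (s, t) -> ~~ uedge b d (s, t) ->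
  adj (edge_swap m a b c d) s t = adj m s t.
Proof. by move=> hv *; rewrite /adj edge_swap_untouched //; apply: ml_graph_sym. Qed.

Lemma valid_swap_of_adj m a b c d : adj m a b -> 0 < m (c, d) -> ~~ uedge a b (c, d) ->
  valid_swap m a b c d.
Proof. by move=> hab hcd /negbTE hn; split; [exact: adj_gt0 | rewrite rem_edgeE hn subn0]. Qed.

Lemma wedge_swap m u v y : valid m -> adj m u v -> adj m u y -> v != y -> ~~ adj m v y ->
  [/\ valid (edge_swap m u v u y), reach m (edge_swap m u v u y) &
      nloops (edge_swap m u v u y) = (nloops m).+1].
Proof.
move=> hv huv huy hvy hnvy.
have nuv := adj_neq huv; have nuy := adj_neq huy.
have hsw : valid_swap m u v u y by apply: valid_swap_of_adj huv (adj_gt0 huy) _; uedge_simpl.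
have [hv' hr hl] :=
  edge_swap_step hv hsw ltac:(by rewrite eqxx) (fun h => nadj_eq0 h hnvy) ltac:(by rewrite eqxx).
by split => //; move: hl; uedge_simpl; lia.
Qed.

Lemma cross_swap m a b c d : valid m -> adj m a b -> adj m c d -> a != c -> b != d ->
  ~~ adj m a c -> ~~ adj m b d ->
  [/\ valid (edge_swap m a b c d), reach m (edge_swap m a b c d) &
      nloops (edge_swap m a b c d) = nloops m].
Proof.
move=> hv hab hcd hac hbd hnac hnbd.
have nab := adj_neq hab; have ncd := adj_neq hcd.
have hbc : b != c by apply: contraNneq hnac => <-.
have hda : d != a by apply: contraNneq hnbd => ->; rewrite adjC.
have hsw : valid_swap m a b c d by apply: valid_swap_of_adj hab (adj_gt0 hcd) _; uedge_simpl.
have [hv' hr hl] := edge_swap_step hv hsw (fun h => nadj_eq0 h hnac) (fun h => nadj_eq0 h hnbd)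
  (fun _ => ltac:(by uedge_simpl)).
by split => //; move: hl; uedge_simpl; lia.
Qed.

Lemma loop_swap m u v w : valid m -> adj m u v -> 0 < m (w, w) -> w != u -> w != v ->
  ~~ adj m u w -> ~~ adj m v w ->
  [/\ valid (edge_swap m u v w w), reach m (edge_swap m u v w w) &
      (nloops (edge_swap m u v w w)).+1 = nloops m].
Proof.
move=> hv huv hww hwu hwv hnuw hnvw; have nuv := adj_neq huv.
have hsw : valid_swap m u v w w by apply: valid_swap_of_adj => //; uedge_simpl.
have [hv' hr hl] := edge_swap_step hv hsw (fun h => nadj_eq0 h hnuw) (fun h => nadj_eq0 h hnvw)
  (fun _ => ltac:(by uedge_simpl)).
by split => //; move: hl; uedge_simpl; lia.
Qed.

Definition loops_raisable m := exists m', [/\ valid m', reach m m' & nloops m < nloops m'].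

Definition clustered m := forall a b c, adj m a b -> adj m b c -> a != c -> adj m a c.

Lemma raisable_or_clustered m : valid m -> loops_raisable m \/ clustered m.
Proof.
move=> hv.
case: (boolP [exists a, exists b, exists c, [&& adj m a b, adj m a c, b != c & ~~ adj m b c]]).
  move=> /existsP [u /existsP [v /existsP [y /and4P [huv huy hvy hnvy]]]]; left.
  have [hv' hr hl] := wedge_swap hv huv huy hvy hnvy.
  by exists (edge_swap m u v u y); split; rewrite ?hl.
move=> hcl; right => a b c hab hbc hac; apply: contraNT hcl => hnac.
by apply/existsP; exists b; apply/existsP; exists a; apply/existsP; exists c;
  rewrite adjC // hab hbc hac hnac.
Qed.

Lemma clustered_exit_raisable m u v y w w' : valid m -> clustered m ->
  adj m u v -> adj m u y -> v != y -> adj m w w' -> u != w -> ~~ adj m u w -> loops_raisable m.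
Proof.
move=> hv hcl huv huy hvy hww' huw hnuw.
have nuv := adj_neq huv; have nuy := adj_neq huy; have nww' := adj_neq hww'.
have hw'u : w' != u by apply: contraNneq hnuw => e; rewrite adjC // -e.
have hnuw' : ~~ adj m u w'.
  by apply: contraNN hnuw => h; rewrite adjC // (hcl w w' u) // 1?adjC // eq_sym.
have hnvw' : ~~ adj m v w' by apply: contraNN hnuw' => h; rewrite (hcl u v w') // eq_sym.
have hnwy : ~~ adj m w y.
  by apply: contraNN hnuw => h; rewrite adjC // (hcl w y u) // 1?adjC // eq_sym.
have hwv : w != v by apply: contraNneq hnuw => ->.
have hwy : w != y by apply: contraNneq hnuw => ->.
have hvw' : v != w' by apply: contraNneq hnuw' => <-.
have hw'y : w' != y by apply: contraNneq hnuw' => ->.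
have [hv1 hr1 hl1] := cross_swap hv huv hww' huw hvw' hnuw hnvw'.
set m1 := edge_swap m u v w w' in hv1 hr1 hl1.
have hsw1 : valid_swap m u v w w' by apply: valid_swap_of_adj huv (adj_gt0 hww') _; uedge_simpl.
have huw1 : adj m1 u w by rewrite /adj huw /m1 edge_swapE uedgeE !eqxx addn1.
have huy1 : adj m1 u y by rewrite adj_edge_swap_untouched //; uedge_simpl.
have hnwy1 : ~~ adj m1 w y by rewrite adj_edge_swap_untouched //; uedge_simpl.
have [hv2 hr2 hl2] := wedge_swap hv1 huw1 huy1 hwy hnwy1.
by exists (edge_swap m1 u w u y); split => //; [exact: rt_trans hr1 hr2 | rewrite hl2 hl1].
Qed.

(* Borrow a loop of the isolated vertex w to break the edge uv, then close two wedges. *)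
Lemma isolated_loop_raisable m u v y d w : valid m ->
  adj m u v -> adj m u y -> adj m y v -> adj m u d -> d != v -> d != y ->
  w != u -> (forall z, ~~ adj m w z) -> 0 < k w -> loops_raisable m.
Proof.
move=> hv huv huy hyv hud hdv hdy hwu hiso hkw; have hs := ml_graph_sym hv.
have nuv := adj_neq huv; have nuy := adj_neq huy; have nyv := adj_neq hyv.
have nud := adj_neq hud.
have nadj_w z : adj m u z -> w != z by move=> huz; apply: contraNneq (hiso u) => ->; rewrite adjC.
have hwv := nadj_w v huv; have hwy := nadj_w y huy; have hwd := nadj_w d hud.
have hww : 0 < m (w, w).
  have hnbr : nbr m w = set0 by apply/setP => z; rewrite inE (negbTE (hiso z)) in_set0.
  by move: hkw; rewrite (ml_graph_deg w hv) hnbr cards0 add0n muln_gt0.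
have [hv1 hr1 hl1] := loop_swap hv huv hww hwu hwv ltac:(by rewrite adjC) ltac:(by rewrite adjC).
set m1 := edge_swap m u v w w in hv1 hr1 hl1.
have hsw1 : valid_swap m u v w w by apply: valid_swap_of_adj => //; uedge_simpl.
have huw1 : adj m1 u w by rewrite /adj eq_sym hwu /m1 edge_swapE uedgeE !eqxx addn1.
have hyu1 : adj m1 y u by rewrite adj_edge_swap_untouched 1?adjC //; uedge_simpl.
have hyv1 : adj m1 y v by rewrite adj_edge_swap_untouched //; uedge_simpl.
have hnuv1 : ~~ adj m1 u v.
  rewrite /adj nuv -leqNgt; have := edge_swap_balance (u, v) hs hsw1.
  by rewrite /m1 (adj_eq1 hv huv); uedge_simpl; rewrite !addn0 addn1 => -[->].
have [hv2 hr2 hl2] := wedge_swap hv1 hyu1 hyv1 nuv hnuv1.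
set m2 := edge_swap m1 y u y v in hv2 hr2 hl2.
have hsw2 : valid_swap m1 y u y v by apply: valid_swap_of_adj hyu1 (adj_gt0 hyv1) _; uedge_simpl.
have huw2 : adj m2 u w by rewrite adj_edge_swap_untouched //; uedge_simpl.
have hud2 : adj m2 u d by rewrite !adj_edge_swap_untouched //; uedge_simpl.
have hnwd2 : ~~ adj m2 w d by rewrite !adj_edge_swap_untouched //; uedge_simpl.
have [hv3 hr3 hl3] := wedge_swap hv2 huw2 hud2 hwd hnwd2.
exists (edge_swap m2 u w u d); split => //; last by rewrite hl3 hl2 -hl1.
by apply: rt_trans hr1 _; apply: rt_trans hr2 hr3.
Qed.

Lemma adj_uedge m a b s t : valid m -> uedge a b (s, t) -> adj m s t = adj m a b.
Proof. by move=> hv /orP [/eqP [-> ->] | /eqP [-> ->]]; rewrite // adjC. Qed.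

Lemma odd_adj m s : valid m -> odd (k s) -> exists t, adj m s t.
Proof.
move=> hv; rewrite (odd_nbr s hv).
have [-> | /set0Pn [t]] := eqVneq (nbr m s) set0; first by rewrite cards0.
by rewrite inE => hst _; exists t.
Qed.

Definition is_matching m := [forall x, #|nbr m x| <= 1].

Lemma matchingP m x y z : is_matching m -> adj m x y -> adj m x z -> y = z.
Proof.
by move=> /forallP /(_ x) /card_le1_eqP hle hy hz; apply: hle; rewrite inE.
Qed.

Lemma matching_odd m s t : valid m -> is_matching m -> adj m s t -> odd (k s).
Proof.
move=> hv hm hst; rewrite (odd_nbr s hv) (_ : nbr m s = [set t]) ?cards1 //.
by apply/setP => z; rewrite !inE; apply/idP/eqP => [hsz | ->]; first exact: matchingP hm hsz hst.
Qed.

Lemma card_nbr_edge_swap m a b c d x : valid m -> valid (edge_swap m a b c d) ->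
  valid_swap m a b c d -> a != b -> c != d -> a != c -> b != d ->
  #|nbr (edge_swap m a b c d) x| = #|nbr m x|.
Proof.
move=> hv hv' hsw hab hcd hac hbd.
have hxx : edge_swap m a b c d (x, x) = m (x, x).
  by apply: edge_swap_untouched; rewrite ?uedge_diag //; apply: ml_graph_sym.
by apply/eqP; rewrite -(eqn_add2r (2 * m (x, x))) -{1}hxx -!ml_graph_deg.
Qed.

Definition missing m M := [set p : V * V | adj M p.1 p.2 && ~~ adj m p.1 p.2].

Lemma matching_eq m M : valid m -> valid M -> is_matching m -> is_matching M ->
  missing m M = set0 -> m = M.
Proof.
move=> hv hV hm hM hmiss.
have hMm s t : adj M s t -> adj m s t.
  by move=> h; apply: contraT => hn; have := in_set0 (s, t); rewrite -hmiss inE h hn.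
have hmM s t : adj m s t -> adj M s t.
  move=> h; have [t' ht'] := odd_adj hV (matching_odd hv hm h).
  by rewrite -(matchingP hm (hMm _ _ ht') h).
apply: ml_graph_eq (hv) (hV) _ => s t hst.
have [h | h] := boolP (adj m s t); first by rewrite (adj_eq1 hv h) (adj_eq1 hV (hmM _ _ h)).
by rewrite (nadj_eq0 hst h) (nadj_eq0 hst) //; apply: contraNN h; apply: hMm.
Qed.

(* An edge ac of M missing from m is created by swapping ab, cd, where b and d are the
   m-partners of a and c; the removed edges ab, cd are not in M since M already matches a, c. *)
Lemma matching_step m M : valid m -> valid M -> is_matching m -> is_matching M ->
  missing m M != set0 ->
  exists m', [/\ valid m', is_matching m', reach m m' & #|missing m' M| < #|missing m M|].
Proof.
move=> hv hV hm hM /set0Pn [[a c]]; rewrite inE /= => /andP [hMac hnac].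
have hs := ml_graph_sym hv.
have hMca : adj M c a by rewrite adjC.
have [b hab] := odd_adj hv (matching_odd hV hM hMac).
have [d hcd] := odd_adj hv (matching_odd hV hM hMca).
have nac := adj_neq hMac; have nab := adj_neq hab; have ncd := adj_neq hcd.
have hbc : b != c by apply: contraNneq hnac => <-.
have hda : d != a by apply: contraNneq hnac => e; rewrite adjC // -e.
have hnbd : ~~ adj m b d.
  by apply/negP => hbd; move/eqP: hda; apply; apply: matchingP hm hbd _; rewrite adjC.
have hbd : b != d.
  by apply: contraNneq nac => e; apply/eqP/(matchingP (x := b) hm); rewrite adjC // ?e.
have [hv' hr _] := cross_swap hv hab hcd nac hbd hnac hnbd.
have hsw : valid_swap m a b c d by apply: valid_swap_of_adj hab (adj_gt0 hcd) _; uedge_simpl.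
exists (edge_swap m a b c d); split => //.
  apply/forallP => x; rewrite card_nbr_edge_swap //.
  by move/forallP: hm.
apply: proper_card; apply/properP; split.
  apply/subsetP => -[s t]; rewrite !inE /= => /andP [hMst hn']; rewrite hMst /=.
  apply: contraNN hn' => hst.
  have hab' : ~~ uedge a b (s, t).
    by apply: contra hbc => /(adj_uedge hV); rewrite hMst => /esym /(matchingP hM hMac) ->.
  have hcd' : ~~ uedge c d (s, t).
    by apply: contra hda => /(adj_uedge hV); rewrite hMst => /esym /(matchingP hM hMca) ->.
  rewrite /adj (adj_neq hst) /=; have := edge_swap_balance (s, t) hs hsw.
  by rewrite (negbTE hab') (negbTE hcd') (adj_eq1 hv hst) /= !addn0 => ->; rewrite -addnA add1n.
exists (a, c); first by rewrite inE /= hMac hnac.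
by rewrite inE /= hMac /= negbK /adj nac edge_swapE uedgeE !eqxx addn1.
Qed.

Lemma matching_reach m M : valid m -> valid M -> is_matching m -> is_matching M -> reach m M.
Proof.
move=> hv hV hm hM; have [n] := ubnP #|missing m M|; elim: n m hv hm => // n IH m hv hm hn.
have [hmiss | hne] := eqVneq (missing m M) set0.
  by rewrite (matching_eq hv hV hm hM hmiss); apply: rt_refl.
have [m' [hv' hm' hr hlt]] := matching_step hv hV hm hM hne.
exact: rt_trans hr (IH m' hv' hm' (leq_trans hlt hn)).
Qed.

Lemma clustered_nbr m u x : valid m -> clustered m -> adj m u x ->
  nbr m x = u |: (nbr m u :\ x).
Proof.
move=> hv hcl hux; apply/setP => z; rewrite !inE.
have [-> | hzu] /= := eqVneq z u; first by rewrite adjC.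
apply/idP/andP => [hxz | [hzx huz]].
  by split; [rewrite eq_sym (adj_neq hxz) | apply: hcl hux hxz _; rewrite eq_sym].
by apply: (hcl x u z); [rewrite adjC | | rewrite eq_sym].
Qed.

Lemma card_nbr_clustered m u x : valid m -> clustered m -> adj m u x ->
  #|nbr m x| = #|nbr m u|.
Proof.
move=> hv hcl hux; rewrite (clustered_nbr hv hcl hux) (cardsD1 x (nbr m u)) cardsU1.
by rewrite !inE hux /adj eqxx /= andbF.
Qed.

Lemma clustered_even m u : valid m -> clustered m -> ~~ odd #|nbr m u| ->
  (forall w, u != w -> ~~ adj m u w -> forall z, ~~ adj m w z) -> forall x, ~~ odd (k x).
Proof.
move=> hv hcl hev hiso x; rewrite (odd_nbr x hv).
have [<- // | hux] := eqVneq u x.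
have [hadj | hnadj] := boolP (adj m u x); first by rewrite (card_nbr_clustered hv hcl hadj).
rewrite (_ : nbr m x = set0) ?cards0 //.
by apply/setP => z; rewrite inE in_set0; apply/negbTE/hiso.
Qed.

Lemma clustered_complete_deg m u : valid m -> clustered m ->
  (forall w, u != w -> adj m u w) -> forall x, k x = #|V|.-1 + 2 * m (x, x).
Proof.
move=> hv hcl hall x; rewrite (ml_graph_deg x hv) -(cardsC1 u).
have <- : nbr m u = [set~ u].
  apply/setP => z; rewrite !inE eq_sym.
  by apply/idP/idP => [/adj_neq | /hall].
have [<- // | hux] := eqVneq u x.
by rewrite (card_nbr_clustered hv hcl (hall x hux)).
Qed.

Section Sufficiency.
Hypothesis hk : forall u, 0 < k u.
Hypothesis hodd : exists u, odd (k u).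
Hypothesis hnc : exists v, (k v < #|V|.-1) || odd (k v - #|V|.-1).

Lemma not_matching_raisable m : valid m -> ~~ is_matching m -> loops_raisable m.
Proof.
move=> hv /forallPn [u]; rewrite -ltnNge => /card_gt1P [v [y [huv huy hvy]]].
rewrite !inE in huv huy.
have [// | hcl] := raisable_or_clustered hv.
have [/existsP [w /existsP [w' /and3P [hww' huw hnuw]]] | hnexit] :=
  boolP [exists w, exists w', [&& adj m w w', u != w & ~~ adj m u w]].
  exact: clustered_exit_raisable hv hcl huv huy hvy hww' huw hnuw.
have hiso w : u != w -> ~~ adj m u w -> forall z, ~~ adj m w z.
  move=> huw hnuw z; apply: contraNN hnexit => hwz.
  by apply/existsP; exists w; apply/existsP; exists z; rewrite hwz huw.
have [/existsP [w /andP [huw hnuw]] | hnout] := boolP [exists w, (u != w) && ~~ adj m u w].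
  have [/existsP [d /and3P [hud hdv hdy]] | hnd] :=
    boolP [exists d, [&& adj m u d, d != v & d != y]].
    have hyv : adj m y v by apply: (hcl y u v); [rewrite adjC | | rewrite eq_sym].
    by apply: isolated_loop_raisable hv huv huy hyv hud hdv hdy _ (hiso w huw hnuw) (hk w);
      rewrite eq_sym.
  exfalso; have [o] := hodd; apply/negP; apply: (clustered_even hv hcl _ hiso).
  rewrite (_ : nbr m u = [set v; y]) ?cards2 ?hvy //.
  apply/setP => z; rewrite !inE; apply/idP/idP => [huz | /orP [] /eqP -> //].
  by apply: contraNT hnd => hz; apply/existsP; exists z; rewrite huz; move: hz; rewrite negb_or.
exfalso; have [x] := hnc; apply/negP.
rewrite (clustered_complete_deg (u := u) hv hcl) => [|w huw]; last first.
  by apply: contraNT hnout => hn; apply/existsP; exists w; rewrite huw.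
by rewrite negb_or -leqNgt leq_addr addKn oddM.
Qed.

Lemma reach_matching m : valid m -> exists M, [/\ valid M, is_matching M & reach m M].
Proof.
move=> hv; have [n] := ubnP (\sum_(u : V) k u - nloops m).
elim: n m hv => // n IH m hv hn.
have [hm | hnm] := boolP (is_matching m); first by exists m; split => //; apply: rt_refl.
have [m' [hv' hr hlt]] := not_matching_raisable hv hnm.
have [|M [hV hM hr']] := IH m' hv'; first by have := nloops_le hv'; lia.
by exists M; split => //; apply: rt_trans hr hr'.
Qed.

Lemma ml_connected_sufficient : ml_connected k.
Proof.
move=> m m' hv hv'.
have [M [hV hM hr]] := reach_matching hv; have [M' [hV' hM' hr']] := reach_matching hv'.
apply: rt_trans hr _; apply: rt_trans (matching_reach hV hV' hM hM') _.
exact: reach_sym.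
Qed.

End Sufficiency.

End MultiloopGraphs.

Theorem theorem2 (V : finType) (k : V -> nat)
  (hk : forall u, 1 <= k u)
  (htwo : exists m m' : mgraph V,
            is_ml_graph k m /\ is_ml_graph k m' /\ m <> m') :
  ml_connected k <->
  ((exists u, odd (k u)) /\
   (exists v, (k v < #|V|.-1) || odd (k v - #|V|.-1))).
Proof.
split => [hc | [hodd hnc]]; last exact: ml_connected_sufficient.
split.
  have [/existsP // | /existsPn heven] := boolP [exists u, odd (k u)].
  by case: (isolated_not_connected (loop_graph_valid heven) htwo (loop_graph_isolated heven) hc).
have [/existsP // | /existsPn hcomp] := boolP [exists v, (k v < #|V|.-1) || odd (k v - #|V|.-1)].
by case: (isolated_not_connected (complete_graph_valid hcomp) htwo
  (complete_graph_isolated hcomp) hc).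
Qed.
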